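(* Let $n\in\mathbb N$, let $W,M$ be disjoint sets with $|W|=|M|=2n$, let $p\in W\cup M$, and let $D=\{(i,j)\in\{1,\dots,n\}^2: i\ne j\}$. There exist functions $\succ_W:\{0,1\}^D\to\mathcal P(W,M)$ and $\succ_M:\{0,1\}^D\to\mathcal P(M,W)$ such that for all $\bar x=(x^i_j)_{(i,j)\in D}$ and $\bar y=(y^i_j)_{(i,j)\in D}$ in $\{0,1\}^D$, the following are equivalent: (1) $p$ is single in some stable marriage with respect to $\succ_W(\bar x)$ and $\succ_M(\bar y)$; (2) $\mathrm{DISJ}(\bar x,\bar y)\ne0$.
   Context: $\mathcal P(A,B)$ is the set of profiles assigning to each $a\in A$ a preference list, i.e. a totally ordered subset of $B$ (others unacceptable). A participant prefers $x$ over $x'$ if $x$ precedes $x'$ on their list, or $x$ is on the list and $x'$ is not (being single counts as being matched to someone off the list). A marriage is a one-to-one map between a subset of $W$ and a subset of $M$; unmatched participants are single. A marriage is stable if every married participant is married to someone on their list and there is no blocking pair $(w,m)$ where $w$ prefers $m$ to her current situation and $m$ prefers $w$ to his. $\mathrm{DISJ}(\bar x,\bar y)=1$ if there is no $(i,j)$ with $x^i_j=y^i_j=1$, and $0$ otherwise. *)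

From mathcomp Require Import all_boot.
Set Implicit Arguments. Unset Strict Implicit. Unset Printing Implicit Defensive.

(* A profile in P(A,B): each a gets a preference list, a duplicate-free
   sequence of elements of B (earlier = more preferred); elements not on the
   list are unacceptable. *)
Definition profile (A B : finType) := A -> seq B.
Definition is_profile (A B : finType) (P : profile A B) : Prop :=
  forall a, uniq (P a).

(* [prefers l x s]: a participant with list l prefers x to situation s,
   where s = None means single (= matched to someone off the list). *)
Definition prefers (B : finType) (l : seq B) (x : B) (s : option B) : bool :=
  (x \in l) &&
  (match s with
   | None => true
   | Some x' => (x' \notin l) || (index x l < index x' l)
   end).

Definition is_marriage (W M : finType) (mu : W -> option M) : Prop :=
  forall w1 w2 m, mu w1 = Some m -> mu w2 = Some m -> w1 = w2.

Definition partnerM (W M : finType) (mu : W -> option M) (m : M) : option W :=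
  [pick w | mu w == Some m].

Definition stable (W M : finType) (PW : profile W M) (PM : profile M W)
  (mu : W -> option M) : Prop :=
  is_marriage mu /\
  (forall w m, mu w = Some m -> (m \in PW w) /\ (w \in PM m)) /\
  (forall w m, ~ (prefers (PW w) m (mu w) && prefers (PM m) w (partnerM mu m))).

Definition single (W M : finType) (mu : W -> option M) (p : W + M) : Prop :=
  match p with
  | inl w => mu w = None
  | inr m => forall w, mu w <> Some m
  end.

Definition Dn (n : nat) := {ij : 'I_n * 'I_n | ij.1 != ij.2}.

Definition DISJ (n : nat) (x y : Dn n -> bool) : nat :=
  if [exists d : Dn n, x d && y d] then 0 else 1.

From mathcomp Require Import all_boot zify.
Set Implicit Arguments. Unset Strict Implicit. Unset Printing Implicit Defensive.

(* Enumerate W \ {p} as w_0, ..., w_(2n-2) and M as m_0, ..., m_(2n-1) (when p is a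
   woman; otherwise exchange the two sides).  Woman w_i, i < n, lists the men m_j with
   x^i_j = 1 and then m_(n+i); man m_j, j < n, lists the women w_i with y^i_j = 1; man
   m_(n+i) lists w_i and then p; p lists m_n, ..., m_(2n-1); the other women list nobody.
   If x and y are disjoint, marrying w_i to m_(n+i) leaves p single and is stable, as a
   blocking pair (w_i, m_j) would need x^i_j = y^i_j = 1.  Conversely, if p is single in
   a stable marriage, every m_(n+i) is married to w_i (otherwise he is single and blocks
   with p); then a common 1 at (i, j) makes (w_i, m_j) blocking, because m_j could only
   be married to some w_k, who is already married to m_(n+k). *)

Definition coord n (x : Dn n -> bool) (i j : nat) : bool :=
  [exists d : Dn n, [&& x d, (val d).1 == i :> nat & (val d).2 == j :> nat]].

Lemma coord_lt n (x : Dn n -> bool) i j : coord x i j -> (i < n) && (j < n).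
Proof. by case/existsP=> d /and3P[_ /eqP <- /eqP <-]; rewrite !ltn_ord. Qed.

Lemma DISJ_neq0 n (x y : Dn n -> bool) :
  DISJ x y <> 0 <-> forall i j, ~~ (coord x i j && coord y i j).
Proof.
rewrite /DISJ; case: existsP => [[d /andP[xd yd]]|disj]; split=> // H.
  case/negP: (H (val d).1 (val d).2).
  by apply/andP; split; apply/existsP; exists d; rewrite ?xd ?yd !eqxx.
move=> i j; apply/negP=> /andP[/existsP[d1 /and3P[xd1 /eqP i1 /eqP j1]]].
case/existsP=> d2 /and3P[yd2 /eqP i2 /eqP j2]; apply: disj; exists d1.
suff e : d1 = d2 by rewrite xd1 e yd2.
by apply/val_inj/injective_projections; apply/val_inj => /=; rewrite ?i1 ?i2 ?j1 ?j2.
Qed.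

Section EnumAt.
Variables (T : finType) (A : {pred T}) (x0 : T).

Definition enum_at (i : nat) : T := nth x0 (enum A) i.
Definition enum_idx (x : T) : nat := index x (enum A).

Lemma enum_idxK i : i < #|A| -> enum_idx (enum_at i) = i.
Proof. by move=> lti; rewrite /enum_idx index_uniq ?enum_uniq // -cardE. Qed.

Lemma enum_atK x : x \in A -> enum_at (enum_idx x) = x.
Proof. by move=> Ax; rewrite /enum_at nth_index ?mem_enum. Qed.

Lemma enum_idx_lt x : (enum_idx x < #|A|) = (x \in A).
Proof. by rewrite /enum_idx cardE index_mem mem_enum. Qed.

Lemma enum_idx_notin x : x \notin A -> enum_idx x = #|A|.
Proof. by move=> Ax; rewrite /enum_idx cardE memNindex ?mem_enum. Qed.

Lemma enum_at_mem i : i < #|A| -> enum_at i \in A.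
Proof. by move=> lti; rewrite -mem_enum mem_nth -?cardE. Qed.

Lemma enum_at_inj i j : i < #|A| -> j < #|A| -> enum_at i = enum_at j -> i = j.
Proof. by move=> lti ltj eij; rewrite -(enum_idxK lti) eij enum_idxK. Qed.

Lemma mem_map_enum_at s i : i < #|A| -> {subset s <= gtn #|A|} ->
  (enum_at i \in map enum_at s) = (i \in s).
Proof.
move=> lti lts; apply/mapP/idP=> [[k sk /enum_at_inj eik]|si]; last by exists i.
by rewrite eik //; apply: lts.
Qed.

Lemma map_enum_at_uniq s : uniq s -> {subset s <= gtn #|A|} -> uniq (map enum_at s).
Proof.
by move=> us lts; rewrite map_inj_in_uniq // => i j /lts lti /lts ltj /enum_at_inj->.
Qed.

End EnumAt.

Lemma prefers_None (B : finType) (l : seq B) b : prefers l b None = (b \in l).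
Proof. by rewrite /prefers andbT. Qed.

Lemma prefers_head (B : finType) (a : B) s b : prefers (a :: s) b (Some a) = false.
Proof. by rewrite /prefers /= eqxx mem_head /= ltn0 andbF. Qed.

Lemma prefers_mem (B : finType) (l : seq B) b s : prefers l b s -> b \in l.
Proof. by case/andP. Qed.

Lemma prefers_rcons (B : finType) (s : seq B) d b :
  d \notin s -> prefers (rcons s d) b (Some d) = (b \in s).
Proof.
move=> ds; rewrite /prefers -cats1 !mem_cat !inE eqxx orbT /= !index_cat (negbTE ds).
case: (boolP (b \in s)) => [bs|/negbTE bs]; first by rewrite /= eqxx addn0 index_mem.
by rewrite /=; case: eqP => // ->; rewrite ltnn.
Qed.

Section Partner.
Variables (W M : finType) (mu : W -> option M).

Lemma partnerM_Some m w : partnerM mu m = Some w -> mu w = Some m.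
Proof. by rewrite /partnerM; case: pickP => // w' /eqP mu_w' [<-]. Qed.

Lemma partnerM_None m : (forall w, mu w <> Some m) -> partnerM mu m = None.
Proof. by move=> mN; rewrite /partnerM; case: pickP => // w /eqP /mN. Qed.

Lemma is_marriage_partnerM : is_marriage (partnerM mu).
Proof. by move=> m1 m2 w /partnerM_Some mu_w /partnerM_Some; rewrite mu_w => -[]. Qed.

End Partner.

Lemma partnerM_marriage (W M : finType) (mu : W -> option M) w m :
  is_marriage mu -> mu w = Some m -> partnerM mu m = Some w.
Proof.
move=> mu_marriage mu_w; rewrite /partnerM; case: pickP => [w' /eqP mu_w'|/(_ w)].
  by rewrite (mu_marriage _ _ _ mu_w' mu_w).
by rewrite mu_w eqxx.
Qed.

Lemma partnerMK (W M : finType) (mu : W -> option M) :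
  is_marriage mu -> partnerM (partnerM mu) =1 mu.
Proof.
move=> mu_marriage w; case mu_w: (mu w) => [m|].
  exact/partnerM_marriage/partnerM_marriage/mu_w/mu_marriage/is_marriage_partnerM.
by apply: partnerM_None => m /partnerM_Some; rewrite mu_w.
Qed.

Lemma stable_partnerM (W M : finType) (PW : profile W M) (PM : profile M W) mu :
  stable PW PM mu -> stable PM PW (partnerM mu).
Proof.
case=> mu_marriage [acceptable no_block]; split; first exact: is_marriage_partnerM.
split=> [m w /partnerM_Some /acceptable[]//|m w].
by rewrite partnerMK // andbC; apply: no_block.
Qed.

Lemma stable_single_inr (W M : finType) (PW : profile W M) (PM : profile M W) m :
  (exists mu, stable PW PM mu /\ single mu (inr m)) <->
  (exists nu, stable PM PW nu /\ single nu (inl m)).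
Proof.
split=> [[mu [st_mu m_single]]|[nu [st_nu m_single]]].
  by exists (partnerM mu); split; [apply: stable_partnerM | apply: partnerM_None].
exists (partnerM nu); split; first exact: stable_partnerM.
by move=> w /partnerM_Some; rewrite /= m_single.
Qed.

Lemma DISJC n (x y : Dn n -> bool) : DISJ x y = DISJ y x.
Proof.
by rewrite /DISJ; congr (if _ then _ else _); apply: eq_existsb => d; rewrite andbC.
Qed.

Section Reduction.
Variables (n : nat) (W M : finType) (P : W) (m0 : M).
Hypotheses (cardW : #|W| = 2 * n) (cardM : #|M| = 2 * n).

Local Notation w_ := (enum_at (predC1 P) P).
Local Notation idxW := (enum_idx (predC1 P)).
Local Notation m_ := (enum_at predT m0).
Local Notation idxM := (enum_idx (T := M) predT).

Let card_women : #|predC1 P| = (2 * n).-1.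
Proof. by rewrite cardC1 cardW. Qed.

Let n_gt0 : 0 < n.
Proof.
have : 0 < #|W| by apply/card_gt0P; exists P.
by rewrite cardW; lia.
Qed.

Lemma w_K i : i < n -> idxW (w_ i) = i.
Proof. by move=> lti; rewrite enum_idxK // card_women; lia. Qed.

Lemma w_neq i : i < n -> (w_ i == P) = false.
Proof.
move=> lti; apply/negbTE; rewrite -[_ != P]/(w_ i \in predC1 P).
by rewrite enum_at_mem // card_women; lia.
Qed.

Lemma w_idx w : w != P -> w_ (idxW w) = w.
Proof. by move=> wP; rewrite enum_atK ?inE. Qed.

Lemma idxW_P : idxW P = (2 * n).-1.
Proof. by rewrite enum_idx_notin ?inE ?eqxx. Qed.

Lemma idxW_lt_neq w : idxW w < n -> w != P.
Proof. by apply: contraTneq => ->; rewrite idxW_P; lia. Qed.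

Lemma mem_map_w s i : i < n -> {subset s <= gtn n} -> (w_ i \in map w_ s) = (i \in s).
Proof.
move=> lti lts; apply: mem_map_enum_at; rewrite card_women; first lia.
by move=> k /lts; rewrite !inE; lia.
Qed.

Lemma map_w_uniq s : uniq s -> {subset s <= gtn n} -> uniq (map w_ s).
Proof.
by move=> us lts; apply: map_enum_at_uniq => // k /lts; rewrite !inE card_women; lia.
Qed.

Lemma m_K k : k < 2 * n -> idxM (m_ k) = k.
Proof. by move=> ltk; rewrite enum_idxK // cardM. Qed.

Lemma idxM_lt m : idxM m < 2 * n.
Proof. by rewrite -cardM enum_idx_lt. Qed.

Lemma m_inj i j : i < 2 * n -> j < 2 * n -> m_ i = m_ j -> i = j.
Proof. by rewrite -cardM; apply: enum_at_inj. Qed.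

Lemma mem_map_m s k : k < 2 * n -> {subset s <= gtn (2 * n)} ->
  (m_ k \in map m_ s) = (k \in s).
Proof. by rewrite -cardM; apply: mem_map_enum_at. Qed.

Lemma map_m_uniq s : uniq s -> {subset s <= gtn (2 * n)} -> uniq (map m_ s).
Proof. by rewrite -cardM; apply: map_enum_at_uniq. Qed.

Definition prefW (x : Dn n -> bool) : profile W M := fun w =>
  if w == P then map m_ (iota n n)
  else let i := idxW w in
  if i < n then map m_ (rcons [seq j <- iota 0 n | coord x i j] (n + i)) else [::].

Definition prefM (y : Dn n -> bool) : profile M W := fun m =>
  let k := idxM m in
  if k < n then map w_ [seq i <- iota 0 n | coord y i k] else [:: w_ (k - n); P].

Definition matching : W -> option M := fun w =>
  let i := idxW w in if i < n then Some (m_ (n + i)) else None.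

Lemma prefW_w x i : i < n ->
  prefW x (w_ i) = map m_ (rcons [seq j <- iota 0 n | coord x i j] (n + i)).
Proof. by move=> lti; rewrite /prefW w_neq // w_K // lti. Qed.

Lemma prefM_low y j : j < n -> prefM y (m_ j) = map w_ [seq i <- iota 0 n | coord y i j].
Proof. by move=> ltj; rewrite /prefM m_K ?ltj //; lia. Qed.

Lemma prefM_high y i : i < n -> prefM y (m_ (n + i)) = [:: w_ i; P].
Proof. by move=> lti; rewrite /prefM m_K ?ltnNge ?leq_addr ?addKn //; lia. Qed.

Lemma mem_prefW_P x i : i < n -> m_ (n + i) \in prefW x P.
Proof. by move=> lti; rewrite /prefW eqxx; apply: map_f; rewrite mem_iota; lia. Qed.

Lemma mem_prefM_low y i j : i < n -> j < n -> (w_ i \in prefM y (m_ j)) = coord y i j.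
Proof.
move=> lti ltj; rewrite prefM_low // mem_map_w ?mem_filter ?mem_iota /= => [|//|k].
  by rewrite lti andbT.
by rewrite mem_filter mem_iota => /andP[_ ltk].
Qed.

Lemma prefers_prefW x i m : i < n ->
  prefers (prefW x (w_ i)) m (Some (m_ (n + i))) =
  (m \in map m_ [seq j <- iota 0 n | coord x i j]).
Proof.
move=> lti; rewrite prefW_w // map_rcons prefers_rcons // mem_map_m => [||k].
- by rewrite mem_filter mem_iota; lia.
- lia.
- by rewrite mem_filter mem_iota inE; lia.
Qed.

Lemma prefW_uniq x : is_profile (prefW x).
Proof.
move=> w; rewrite /prefW; case: ifP => _.
  by apply: map_m_uniq => [|k]; rewrite ?iota_uniq // mem_iota inE; lia.
case: ifP => // lti; apply: map_m_uniq => [|k].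
  by rewrite rcons_uniq filter_uniq ?iota_uniq // mem_filter mem_iota andbT; lia.
by rewrite mem_rcons !inE mem_filter mem_iota; lia.
Qed.

Lemma prefM_uniq y : is_profile (prefM y).
Proof.
move=> m; rewrite /prefM; case: ltnP => [ltk|lek].
  apply: map_w_uniq => [|i]; first by rewrite filter_uniq ?iota_uniq.
  by rewrite mem_filter mem_iota inE => /andP[_]; lia.
by have := idxM_lt m => ltk; rewrite /= inE andbT w_neq //; lia.
Qed.

Lemma matching_w i : i < n -> matching (w_ i) = Some (m_ (n + i)).
Proof. by move=> lti; rewrite /matching w_K // lti. Qed.

Lemma matching_P : matching P = None.
Proof. by rewrite /matching idxW_P ifN //; have := n_gt0; lia. Qed.

Lemma matching_Some w m :
  matching w = Some m -> exists2 i, i < n & w = w_ i /\ m = m_ (n + i).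
Proof.
rewrite /matching; case: ifP => // lti [<-]; exists (idxW w) => //; split=> //.
by rewrite w_idx // idxW_lt_neq.
Qed.

Lemma is_marriage_matching : is_marriage matching.
Proof.
move=> _ _ _ /matching_Some[i lti [-> ->]] /matching_Some[j ltj [-> eij]].
have /eqP : n + i = n + j by apply: (m_inj _ _ eij); lia.
by rewrite eqn_add2l => /eqP->.
Qed.

Lemma prefM_low_women y j w : j < n -> w \in prefM y (m_ j) -> exists2 i, i < n & w = w_ i.
Proof.
move=> ltj; rewrite prefM_low // => /mapP[i].
by rewrite mem_filter mem_iota => /andP[_ lti] ->; exists i.
Qed.

Lemma partner_matching i : i < n -> partnerM matching (m_ (n + i)) = Some (w_ i).
Proof. by move=> lti; apply/partnerM_marriage/matching_w/lti/is_marriage_matching. Qed.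

Lemma stable_matching x y :
  (forall i j, ~~ (coord x i j && coord y i j)) -> stable (prefW x) (prefM y) matching.
Proof.
move=> disj; split; first exact: is_marriage_matching.
split=> [w m /matching_Some[i lti [-> ->]]|w m].
  rewrite prefW_w // prefM_high // mem_head; split=> //.
  by apply: map_f; rewrite mem_rcons mem_head.
case: (ltnP (idxW w) n) => [lti|lei].
  rewrite -(w_idx (idxW_lt_neq lti)) matching_w // prefers_prefW //.
  case/andP=> /mapP[j]; rewrite mem_filter mem_iota => /andP[xij ltj] -> /prefers_mem.
  by rewrite mem_prefM_low // => yij; have := disj (idxW w) j; rewrite xij yij.
have -> : matching w = None by rewrite /matching ltnNge lei.
rewrite prefers_None /prefW ltnNge lei; case: eqP => [_|//].
move=> /andP[/mapP[k]]; rewrite mem_iota => /andP[lek ltk] ->.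
by rewrite -(subnKC lek) partner_matching ?prefM_high ?prefers_head //; lia.
Qed.

Lemma stable_single_matched x y mu :
  stable (prefW x) (prefM y) mu -> mu P = None ->
  forall i, i < n -> mu (w_ i) = Some (m_ (n + i)).
Proof.
case=> _ [acceptable no_block] P_single i lti.
case: (eqVneq (mu (w_ i)) (Some (m_ (n + i)))) => // /eqP mu_wi; exfalso.
have m_single w : mu w <> Some (m_ (n + i)).
  move=> mu_w; have [_] := acceptable _ _ mu_w.
  by rewrite prefM_high // !inE => /orP[] /eqP ew; move: mu_w; rewrite ew // P_single.
apply: (no_block P (m_ (n + i))).
rewrite P_single prefers_None mem_prefW_P // (partnerM_None m_single) prefers_None.
by rewrite prefM_high // !inE eqxx orbT.
Qed.

Lemma stable_single_disjoint x y mu :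
  stable (prefW x) (prefM y) mu -> mu P = None ->
  forall i j, ~~ (coord x i j && coord y i j).
Proof.
move=> st P_single i j; apply/negP=> /andP[xij yij].
have /andP[lti ltj] := coord_lt xij.
have matched := stable_single_matched st P_single.
case: st => _ [acceptable no_block]; apply: (no_block (w_ i) (m_ j)).
rewrite matched // prefers_prefW // map_f /=; last by rewrite mem_filter xij mem_iota ltj.
case partner_j: (partnerM mu (m_ j)) => [w|]; last by rewrite prefers_None mem_prefM_low.
have mu_w := partnerM_Some partner_j.
have [k ltk ew] := prefM_low_women ltj (proj2 (acceptable _ _ mu_w)).
move: mu_w; rewrite ew matched // => -[e].
have : n + k = j by apply: (m_inj _ _ e); lia.
lia.
Qed.

End Reduction.

Lemma stable_single_woman_iff (n : nat) (W M : finType)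
  (cardW : #|W| = 2 * n) (cardM : #|M| = 2 * n) (P : W) :
  exists (SW : (Dn n -> bool) -> profile W M) (SM : (Dn n -> bool) -> profile M W),
    (forall x, is_profile (SW x)) /\ (forall y, is_profile (SM y)) /\
    forall x y : Dn n -> bool,
      (exists mu : W -> option M, stable (SW x) (SM y) mu /\ single mu (inl P)) <->
      DISJ x y <> 0.
Proof.
have /card_gt0P[m0 _] : 0 < #|M| by rewrite cardM -cardW; apply/card_gt0P; exists P.
exists (prefW P m0), (prefM P); split; first exact: prefW_uniq.
split=> [|x y]; first exact: prefM_uniq.
rewrite DISJ_neq0; split=> [[mu [st P_single]]|disj].
  exact: stable_single_disjoint st P_single.
by exists (matching n P m0); split; [apply: stable_matching | apply: matching_P].
Qed.

Theorem lemma21 (n : nat) (W M : finType) (hW : #|W| = 2 * n) (hM : #|M| = 2 * n)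
  (p : W + M) :
  exists (SW : (Dn n -> bool) -> profile W M) (SM : (Dn n -> bool) -> profile M W),
    (forall x, is_profile (SW x)) /\ (forall y, is_profile (SM y)) /\
    forall x y : Dn n -> bool,
      (exists mu : W -> option M, stable (SW x) (SM y) mu /\ single mu p) <->
      DISJ x y <> 0.
Proof.
case: p => [P|P]; first exact: stable_single_woman_iff.
have [SM [SW [SM_profile [SW_profile SM_iff]]]] := stable_single_woman_iff hM hW P.
exists SW, SM; do 2!split=> //; move=> x y.
by rewrite stable_single_inr SM_iff DISJC.
Qed.
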